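(* Let $\mathcal{G}=(\mathcal{V},\mathcal{E})$ be a directed graph with $\mathcal{V}=[n]$, and consider the discrete-time networked SIR dynamics $$s_i[k+1]=s_i[k]-h s_i[k]\beta\sum_{j\in\bar{\mathcal{N}}_i}a_{ij}x_j[k],\quad x_i[k+1]=(1-h\delta)x_i[k]+h s_i[k]\beta\sum_{j\in\bar{\mathcal{N}}_i}a_{ij}x_j[k],\quad r_i[k+1]=r_i[k]+h\delta x_i[k]$$ for all $i\in\mathcal{V}$, $k\in\mathbb{Z}_{\ge0}$. Suppose that (i) for all $i\in\mathcal{V}$, $s_i[0]\in(0,1]$, $x_i[0]\in[0,1)$, $r_i[0]=0$ and $s_i[0]+x_i[0]=1$; and (ii) $h,\beta,\delta>0$ with $h\delta<1$, $a_{ij}>0$ for all $i\neq j$ with $(j,i)\in\mathcal{E}$, and $h\beta\sum_{j\in\bar{\mathcal{N}}_i}a_{ij}<1$ for all $i\in\mathcal{V}$. Then for every $i\in\mathcal{V}$ (with $k\in\mathbb{Z}_{\ge0}$): (a) $s_i[k]>0$ for all $k\ge0$; (b) if $d_i\neq+\infty$, then $x_i[k]=0$ for all $k<d_i$ and $x_i[k]\in(0,1)$ for all $k\ge d_i$; (c) if $d_i\neq+\infty$, then $r_i[k]=0$ for all $k\le d_i$ and $r_i[k]\in(0,1)$ for all $k>d_i$; (d) if $i\in\mathcal{S}_H$ and $d_i=+\infty$, then $x_i[k]=0$ and $r_i[k]=0$ for all $k\ge0$.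
   Context: A directed edge from node $j$ to node $i$ is written $(j,i)$; $\mathcal{E}$ may contain self-loops. $\mathcal{N}_i=\{j:(j,i)\in\mathcal{E}\}$ and $\bar{\mathcal{N}}_i=\mathcal{N}_i\cup\{i\}$. The weights satisfy $a_{ij}\ge0$, with $a_{ij}$ the weight associated with edge $(j,i)$. $s_i[k],x_i[k],r_i[k]$ are the susceptible, infected and recovered proportions at node $i$ and time $k$. A directed path of length $t$ from $i_0$ to $i_t$ is a sequence of edges $(i_0,i_1),\dots,(i_{t-1},i_t)$; for distinct $i,j$ with a path from $i$ to $j$, $d_{ij}$ is the shortest length of such a path. Define $\mathcal{S}_I=\{i\in\mathcal{V}:x_i[0]>0\}$ and $\mathcal{S}_H=\{i\in\mathcal{V}:x_i[0]=0\}$. For $i\in\mathcal{S}_I$, $d_i=0$; for $i\in\mathcal{S}_H$, $d_i=\min_{j\in\mathcal{S}_I}d_{ji}$ (taken over $j$ having a path to $i$), and $d_i=+\infty$ if no $j\in\mathcal{S}_I$ has a path to $i$. *)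

From HB Require Import structures.
From mathcomp Require Import all_boot all_order all_algebra.
Set Implicit Arguments. Unset Strict Implicit. Unset Printing Implicit Defensive.
Import Order.TTheory GRing.Theory Num.Theory.
Local Open Scope ring_scope.

(* Graph on V = 'I_n given by an edge relation E : rel 'I_n;
   E u v means that the directed edge (u,v) (from u to v) is in the edge set.
   Hence N_i = [pred j | E j i] and Nbar_i = [pred j | E j i || (j == i)]. *)

Definition dpath {n : nat} (E : rel 'I_n) (t : nat) (j i : 'I_n) : Prop :=
  exists p : seq 'I_n, size p = t /\ path E j p /\ last j p = i.

Definition dist_nodes {n : nat} (E : rel 'I_n) (j i : 'I_n) (d : nat) : Prop :=
  j != i /\ dpath E d j i /\ (forall t, dpath E t j i -> (d <= t)%N).

Definition has_path {n : nat} (E : rel 'I_n) (j i : 'I_n) : Prop :=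
  j != i /\ exists t, dpath E t j i.

(* d_i = d (finite), where S_I = {j | x0 j > 0}, S_H = {j | x0 j = 0} *)
Definition dist_is {R : numDomainType} {n : nat} (x0 : 'I_n -> R)
  (E : rel 'I_n) (i : 'I_n) (d : nat) : Prop :=
  (0 < x0 i /\ d = 0%N) \/
  (x0 i = 0 /\ (exists j, 0 < x0 j /\ dist_nodes E j i d) /\
    (forall j d', 0 < x0 j -> dist_nodes E j i d' -> (d <= d')%N)).

Definition dist_infinite {R : numDomainType} {n : nat} (x0 : 'I_n -> R)
  (E : rel 'I_n) (i : 'I_n) : Prop :=
  forall j, 0 < x0 j -> ~ has_path E j i.

From mathcomp Require Import all_boot all_order all_algebra.
From mathcomp Require Import lra ring.
From Stdlib Require Import Classical_Prop.
Set Implicit Arguments. Unset Strict Implicit. Unset Printing Implicit Defensive.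
Import Order.TTheory GRing.Theory Num.Theory.
Local Open Scope ring_scope.

(* Conservation s + x + r = 1 and the step-size conditions keep s positive and
   x, r nonnegative for all times.  Positivity of x then spreads exactly one
   edge per step: x_i[k+1] > 0 iff x_j[k] > 0 for some j in Nbar_i.  So x_i[k] > 0
   iff some initially infected node reaches i by a path of length at most k,
   i.e. iff k >= d_i; and r_i, which accumulates h delta x_i, becomes positive
   one step later. *)

Section Paths.

Variables (n : nat) (E : rel 'I_n).

Lemma dpath_nil i : dpath E 0 i i.
Proof. by exists [::]. Qed.

Lemma dpath_rcons t j u i : dpath E t j u -> E u i -> dpath E t.+1 j i.
Proof.
case=> p [sp [pp lp]] Eui; exists (rcons p i).
by rewrite size_rcons sp rcons_path pp lp Eui last_rcons.
Qed.

Lemma dist_nodes_exists t j i :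
  j != i -> dpath E t j i -> exists2 d, (d <= t)%N & dist_nodes E j i d.
Proof.
elim/ltn_ind: t => t IH nji pt.
have [[t' lt_t't pt']|shortest] := classic (exists2 t', (t' < t)%N & dpath E t' j i).
  have [d le_dt' dd] := IH t' lt_t't nji pt'.
  by exists d => //; apply: leq_trans le_dt' (ltnW lt_t't).
exists t => //; split=> //; split=> // t' pt'.
by rewrite leqNgt; apply/negP => lt_t't; apply: shortest; exists t'.
Qed.

Variables (R : numDomainType) (x0 : 'I_n -> R).

Lemma dist_is_reached i d :
  dist_is x0 E i d -> exists2 j, 0 < x0 j & dpath E d j i.
Proof.
case=> [[x0i ->]|[_ [[j [x0j [_ [pd _]]]] _]]]; last by exists j.
by exists i => //; apply: dpath_nil.
Qed.

Lemma dist_is_min i d j t :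
  dist_is x0 E i d -> 0 < x0 j -> dpath E t j i -> (d <= t)%N.
Proof.
case=> [[_ ->] //|[x0i [_ dmin]]] x0j pt.
have nji : j != i by apply: contraTneq x0j => ->; rewrite x0i ltxx.
have [d' le_d't dd'] := dist_nodes_exists nji pt.
exact: leq_trans (dmin j d' x0j dd') le_d't.
Qed.

Lemma dist_infinite_no_dpath i j t :
  x0 i = 0 -> dist_infinite x0 E i -> 0 < x0 j -> ~ dpath E t j i.
Proof.
move=> x0i dinf x0j pt.
have nji : j != i by apply: contraTneq x0j => ->; rewrite x0i ltxx.
by apply: (dinf j x0j); split=> //; exists t.
Qed.

End Paths.

Section SIR.

Variables (R : realFieldType) (n : nat) (E : rel 'I_n).
Variables (a : 'I_n -> 'I_n -> R) (h beta delta : R) (s x r : nat -> 'I_n -> R).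

Local Notation pressure k i := (\sum_(j | E j i || (j == i)) a i j * x k j).

Hypothesis ha_nonneg : forall i j, 0 <= a i j.
Hypothesis hx_rec : forall k i, x k.+1 i =
  (1 - h * delta) * x k i + h * s k i * beta * pressure k i.
Hypothesis hr_rec : forall k i, r k.+1 i = r k i + h * delta * x k i.
Hypotheses (hh : 0 < h) (hbeta : 0 < beta) (hdelta : 0 < delta).
Hypothesis hhdelta : h * delta < 1.

Lemma pressure_ge0 k i : (forall j, 0 <= x k j) -> 0 <= pressure k i.
Proof. by move=> x_ge0; apply: sumr_ge0 => j _; rewrite mulr_ge0. Qed.

Section Invariant.

Hypothesis hs_rec : forall k i, s k.+1 i = s k i - h * s k i * beta * pressure k i.
Hypothesis hinit : forall i, [/\ 0 < s 0%N i <= 1, 0 <= x 0%N i < 1, r 0%N i = 0 &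
                               s 0%N i + x 0%N i = 1].
Hypothesis hsum : forall i, h * beta * \sum_(j | E j i || (j == i)) a i j < 1.

Lemma pressure_lt k i : (forall j, x k j <= 1) -> h * beta * pressure k i < 1.
Proof.
move=> x_le1; apply: le_lt_trans (hsum i).
rewrite ler_pM2l ?mulr_gt0 //.
by apply: ler_sum => j _; rewrite ler_piMr.
Qed.

Lemma sir_invariant k i :
  [/\ 0 < s k i, 0 <= x k i, 0 <= r k i & s k i + x k i + r k i = 1].
Proof.
elim: k i => [|k IH] i.
  by have [/andP[s0 _] /andP[x0 _] -> sx1] := hinit i; rewrite addr0.
have x_ge0 j : 0 <= x k j by case: (IH j).
have x_le1 j : x k j <= 1 by case: (IH j) => *; lra.
have P_ge0 := pressure_ge0 i x_ge0.
have P_lt := pressure_lt i x_le1.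
have [s_gt0 _ r_ge0 sxr1] := IH i.
rewrite hs_rec hx_rec hr_rec; split.
- have -> : s k i - h * s k i * beta * pressure k i =
            s k i * (1 - h * beta * pressure k i) by ring.
  by rewrite mulr_gt0 // subr_gt0.
- by rewrite addr_ge0 ?mulr_ge0 ?subr_ge0 ?x_ge0 ?P_ge0 ?ltW.
- by rewrite addr_ge0 ?r_ge0 ?mulr_ge0 ?x_ge0 ?ltW.
- by rewrite -[RHS]sxr1; ring.
Qed.

End Invariant.

Section Support.

Hypothesis hs_gt0 : forall k i, 0 < s k i.
Hypothesis hx_ge0 : forall k i, 0 <= x k i.
Hypothesis ha_pos : forall i j, i != j -> E j i -> 0 < a i j.

Lemma x_succ_gt0 m i : 0 < x m i -> 0 < x m.+1 i.
Proof.
move=> xi; rewrite hx_rec; apply: ltr_pwDl; first by rewrite mulr_gt0 ?subr_gt0.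
by rewrite !mulr_ge0 ?(pressure_ge0 _ (hx_ge0 m)) ?ltW ?hs_gt0.
Qed.

Lemma x_succ_gt0_nbr m j i : E j i -> 0 < x m j -> 0 < x m.+1 i.
Proof.
move=> Eji xj; have [<-|nji] := eqVneq j i; first exact: x_succ_gt0.
have P_gt0 : 0 < pressure m i.
  rewrite (bigD1 j) ?Eji //=; apply: ltr_pwDl.
    by rewrite mulr_gt0 ?ha_pos 1?eq_sym.
  by apply: sumr_ge0 => l _; rewrite mulr_ge0.
rewrite hx_rec; apply: ltr_wpDl; first by rewrite mulr_ge0 ?subr_ge0 ?hx_ge0 ?ltW.
by rewrite !mulr_gt0 ?hs_gt0.
Qed.

Lemma x_succ_gt0_inv m i :
  0 < x m.+1 i -> exists2 j, E j i || (j == i) & 0 < x m j.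
Proof.
move=> xi; apply/exists_inP; apply: contraTT xi => /exists_inP none.
have x_eq0 j : E j i || (j == i) -> x m j = 0.
  move=> ej; have := hx_ge0 m j; rewrite le_eqVlt => /orP[/eqP <- //|xj].
  by case: none; exists j.
rewrite -leNgt hx_rec big1 => [|j /x_eq0 ->]; last by rewrite mulr0.
by rewrite x_eq0 ?eqxx ?orbT // !mulr0 addr0.
Qed.

Lemma x_gt0_mono m k i : 0 < x m i -> (m <= k)%N -> 0 < x k i.
Proof.
move=> xm; elim: k => [|k IH]; first by rewrite leqn0 => /eqP <-.
by rewrite leq_eqVlt ltnS => /orP[/eqP <- //|/IH /x_succ_gt0].
Qed.

Lemma x_gt0_dpath m t j i : 0 < x m j -> dpath E t j i -> 0 < x (m + t) i.
Proof.
move=> xj [p [<- [pp <-]]]; elim: p m j xj pp => [|u p IH] m j xj /=.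
  by rewrite addn0.
by case/andP=> Eju pp; rewrite addnS -addSn; apply: IH pp; apply: x_succ_gt0_nbr Eju xj.
Qed.

Lemma x_gt0_source k i :
  0 < x k i -> exists j t, [/\ 0 < x 0%N j, dpath E t j i & (t <= k)%N].
Proof.
elim: k i => [|k IH] i xi; first by exists i, 0%N; split=> //; apply: dpath_nil.
have [j /orP[Eji|/eqP ->] /IH [l [t [xl pt le_tk]]]] := x_succ_gt0_inv xi.
  by exists l, t.+1; split=> //; apply: dpath_rcons pt Eji.
by exists l, t; split=> //; apply: leqW.
Qed.

Lemma x_gt0_from_dist i d :
  dist_is (x 0%N) E i d -> forall k, (d <= k)%N -> 0 < x k i.
Proof.
move=> /dist_is_reached [j xj pd] k le_dk.
by apply: x_gt0_mono le_dk; have := x_gt0_dpath xj pd; rewrite add0n.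
Qed.

Lemma x_eq0_before_dist i d :
  dist_is (x 0%N) E i d -> forall k, (k < d)%N -> x k i = 0.
Proof.
move=> di k lt_kd; apply/eqP; rewrite eq_le hx_ge0 andbT leNgt.
apply/negP => /x_gt0_source [j [t [xj pt le_tk]]].
have le_dk := leq_trans (dist_is_min di xj pt) le_tk.
by rewrite ltnNge le_dk in lt_kd.
Qed.

Lemma x_eq0_unreached i :
  x 0%N i = 0 -> dist_infinite (x 0%N) E i -> forall k, x k i = 0.
Proof.
move=> x0i dinf k; apply/eqP; rewrite eq_le hx_ge0 andbT leNgt.
apply/negP => /x_gt0_source [j [t [xj pt _]]].
exact: (dist_infinite_no_dpath x0i dinf xj pt).
Qed.

End Support.

Lemma r_eq0_until i d :
  r 0%N i = 0 -> (forall k, (k < d)%N -> x k i = 0) ->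
  forall k, (k <= d)%N -> r k i = 0.
Proof.
move=> r0 x_eq0; elim=> [//|k IH] lt_kd.
by rewrite hr_rec IH ?(ltnW lt_kd) // x_eq0 // mulr0 addr0.
Qed.

Lemma r_gt0_after i d :
  0 <= r d i -> (forall k, (d <= k)%N -> 0 < x k i) ->
  forall k, (d < k)%N -> 0 < r k i.
Proof.
move=> rd x_gt0; elim=> [//|k IH]; rewrite ltnS leq_eqVlt => /orP[/eqP <-|lt_dk].
  by rewrite hr_rec; apply: (ltr_wpDl rd); rewrite !mulr_gt0 ?x_gt0.
rewrite hr_rec; apply: (ltr_wpDr _ (IH lt_dk)).
by rewrite !mulr_ge0 ?ltW ?x_gt0 ?(ltnW lt_dk).
Qed.

End SIR.

Theorem lemma1 (R : realFieldType) (n : nat) (E : rel 'I_n)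
  (a : 'I_n -> 'I_n -> R) (h beta delta : R)
  (s x r : nat -> 'I_n -> R)
  (ha_nonneg : forall i j, 0 <= a i j)
  (hs_rec : forall k i, s k.+1 i =
     s k i - h * s k i * beta * \sum_(j | E j i || (j == i)) a i j * x k j)
  (hx_rec : forall k i, x k.+1 i =
     (1 - h * delta) * x k i + h * s k i * beta * \sum_(j | E j i || (j == i)) a i j * x k j)
  (hr_rec : forall k i, r k.+1 i = r k i + h * delta * x k i)
  (hinit : forall i, [/\ 0 < s 0%N i <= 1, 0 <= x 0%N i < 1, r 0%N i = 0 &
                          s 0%N i + x 0%N i = 1])
  (hh : 0 < h) (hbeta : 0 < beta) (hdelta : 0 < delta) (hhdelta : h * delta < 1)
  (ha_pos : forall i j, i != j -> E j i -> 0 < a i j)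
  (hsum : forall i, h * beta * \sum_(j | E j i || (j == i)) a i j < 1) :
  forall i : 'I_n,
    (forall k, 0 < s k i) /\
    (forall d, dist_is (x 0%N) E i d ->
       (forall k, (k < d)%N -> x k i = 0) /\ (forall k, (d <= k)%N -> 0 < x k i < 1)) /\
    (forall d, dist_is (x 0%N) E i d ->
       (forall k, (k <= d)%N -> r k i = 0) /\ (forall k, (d < k)%N -> 0 < r k i < 1)) /\
    (x 0%N i = 0 -> dist_infinite (x 0%N) E i -> forall k, x k i = 0 /\ r k i = 0).
Proof.
move=> i.
have inv := sir_invariant ha_nonneg hx_rec hr_rec hh hbeta hdelta hhdelta hs_rec hinit hsum.
have s_gt0 k j : 0 < s k j by case: (inv k j).
have x_ge0 k j : 0 <= x k j by case: (inv k j).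
have r_ge0 k : 0 <= r k i by case: (inv k i).
have x_lt1 k : x k i < 1 by case: (inv k i) => *; lra.
have r_lt1 k : r k i < 1 by case: (inv k i) => *; lra.
have r0 : r 0%N i = 0 by case: (hinit i).
have x_gt0 := x_gt0_from_dist ha_nonneg hx_rec hh hbeta hhdelta s_gt0 x_ge0 ha_pos.
have x_eq0 := x_eq0_before_dist hx_rec x_ge0.
split=> //; split; [|split].
- move=> d di; split; first exact: x_eq0 di.
  by move=> k /(x_gt0 _ _ di k) ->; rewrite x_lt1.
- move=> d di; split; first exact: (r_eq0_until hr_rec r0 (x_eq0 _ _ di)).
  by move=> k /(r_gt0_after hr_rec hh hdelta (r_ge0 d) (x_gt0 _ _ di)) ->; rewrite r_lt1.
- move=> x0i dinf k; have x_unreached := x_eq0_unreached hx_rec x_ge0 x0i dinf.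
  by split=> //; apply: (r_eq0_until hr_rec r0 (fun k' _ => x_unreached k') (leqnn k)).
Qed.
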